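(* Assume the Smoothness Assumption and the Extended KŁ Assumption (see context), and $r>\rho$. Let $\{x^k_\tau,y^k_\tau,z^k_\tau\}$ be generated by Algorithm 1 with $\beta\le\frac{L_y}{20r\varpi}$ if $\theta\in[0,\frac12]$, and for each $k,\tau$ let $y(z^k_{\tau+1})$ be any element of $\arg\max_{y\in\mathcal Y}d_r(y,z^k_{\tau+1})$. Then for any $k\ge0$ and $0\le\tau\le T-1$, $$20r\beta\big\|x_r(y(z^k_{\tau+1}),z^k_{\tau+1})-x_r(y^k_{\tau,+}(z^k_{\tau+1}),z^k_{\tau+1})\big\|^2\le L_y\|y^k_\tau-y^k_{\tau,+}(z^k_{\tau+1})\|^2+\chi_\theta C_\beta,$$ where $\chi_\theta=0$ for $\theta\in[0,\frac12]$ and $\chi_\theta=1$ for $\theta\in(\frac12,1]$ (with $\chi_\theta C_\beta:=0$ when $\theta\in[0,\frac12]$), $C_\beta=\frac{2\theta-1}{2\theta}\Big(\frac{20r\kappa}{(2\theta L_y)^{1/(2\theta)}}\Big)^{\frac{2\theta}{2\theta-1}}\beta^{\frac{2\theta}{2\theta-1}}$, and $\varpi=\frac{2(\ell D_{\mathcal Y})^{1-2\theta}}{r-\rho}\cdot\frac{\frac2{\alpha_y^2}+2L_y^2\sigma_2^2+2L_y^2}{\mu^2}$, $\kappa=\frac2{r-\rho}\Big(\frac{\sqrt{\frac2{\alpha_y^2}+2L_y^2\sigma_2^2+2L_y^2}}{\mu}\Big)^{1/\theta}$, $\sigma_2=2+\frac{L_y}{r-\rho}$.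
   Context: Problem. Let $\mathcal X\subseteq\mathbb R^{d_x}$, $\mathcal Y\subseteq\mathbb R^{d_y}$ be nonempty closed convex sets, $\mathbb P$ a distribution on $\Xi$, $f:\mathbb R^{d_x}\times\mathbb R^{d_y}\times\Xi\to\mathbb R$, $F(x,y)=\mathbb E_{\xi\sim\mathbb P}[f(x,y;\xi)]$ (finite-sum or online setting). Smoothness Assumption: (i) $\mathcal Y$ compact with diameter $D_{\mathcal Y}$; (ii) $\mathbb E|f(x_1,y_1;\xi)-f(x_2,y_2;\xi)|\le\ell(\|x_1-x_2\|+\|y_1-y_2\|)$ on $\mathcal X\times\mathcal Y$; (iii) for all $x,x_i\in\mathcal X$, $y,y_i\in\mathcal Y$: $\mathbb E\|\nabla_xf(x_1,y;\xi)-\nabla_xf(x_2,y;\xi)\|^2\le L_x^2\|x_1-x_2\|^2$, $\mathbb E\|\nabla_xf(x,y_1;\xi)-\nabla_xf(x,y_2;\xi)\|^2\le L_y^2\|y_1-y_2\|^2$, $\mathbb E\|\nabla_yf(x_1,y_1;\xi)-\nabla_yf(x_2,y_2;\xi)\|^2\le L_y^2(\|x_1-x_2\|^2+\|y_1-y_2\|^2)$; (iv) $F(\cdot,y)+\frac\rho2\|\cdot\|^2$ convex on $\mathcal X$ for each $y$; (v) unbiased stochastic gradients with variances at most $\sigma_x^2,\sigma_y^2$; (vi) $\max_y\min_xF\ge\underline F$. Extended KŁ Assumption: $\exists\mu>0,\theta\in[0,1]$: $\mathrm{dist}(0,-\nabla_yF(x,y)+\mathcal N_{\mathcal Y}(y))\ge\mu(\max_{y'\in\mathcal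 Y}F(x,y')-F(x,y))^\theta$ for all $x\in\mathcal X,y\in\mathcal Y$. Notation: $F_r(x,y,z)=F(x,y)+\frac r2\|x-z\|^2$, $x_r(y,z)=\arg\min_{x\in\mathcal X}F_r$, $d_r(y,z)=\min_{x\in\mathcal X}F_r$, $y^k_{\tau,+}(z)=\mathrm{proj}_{\mathcal Y}(y^k_\tau+\alpha_y\nabla_yF(x_r(y^k_\tau,z),y^k_\tau))$. Algorithm 1: Input $(x^0_0,y^0_0,z^0_0)$, positive integers $K,T,M,B$, parameters $\alpha_x,\alpha_y,\beta,r>0$; SPIDER estimators $G^k_{x,\tau},G^k_{y,\tau}$ (minibatch of size $B$ at $\tau=0$, with $B=N$ in the finite-sum setting; for $\tau\ge1$, $G^k_{\cdot,\tau}=\frac1M\sum_{i=1}^M[\nabla_\cdot f(x^k_\tau,y^k_\tau;\xi^k_{\tau,i})-\nabla_\cdot f(x^k_{\tau-1},y^k_{\tau-1};\xi^k_{\tau,i})]+G^k_{\cdot,\tau-1}$); updates $x^k_{\tau+1}=\mathrm{proj}_{\mathcal X}(x^k_\tau-\alpha_x[G^k_{x,\tau}+r(x^k_\tau-z^k_\tau)])$, $y^k_{\tau+1}=\mathrm{proj}_{\mathcal Y}(y^k_\tau+\alpha_yG^k_{y,\tau})$, $z^k_{\tau+1}=z^k_\tau+\beta(x^k_{\tau+1}-z^k_\tau)$, $\tau=0,\dots,T-1$; $(x^{k+1}_0,y^{k+1}_0,z^{k+1}_0)=(x^k_T,y^k_T,z^k_T)$. *)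

From HB Require Import structures.
From mathcomp Require Import all_boot all_order all_algebra.
From mathcomp Require Import all_classical all_reals all_analysis.
Set Implicit Arguments. Unset Strict Implicit. Unset Printing Implicit Defensive.
Import Order.TTheory GRing.Theory Num.Theory.
Import numFieldNormedType.Exports.
Local Open Scope classical_set_scope.
Local Open Scope ring_scope.

Section Defs.
Variable R : realType.

Definition dotv n (u v : 'rV[R]_n) : R := \sum_(i < n) u ord0 i * v ord0 i.
Definition sqnorm n (u : 'rV[R]_n) : R := dotv u u.
Definition enorm n (u : 'rV[R]_n) : R := Num.sqrt (sqnorm u).

Definition is_grad n (phi : 'rV[R]_n -> R) (x g : 'rV[R]_n) : Prop :=
  differentiable phi x /\ forall h, 'd phi x h = dotv g h.

Definition convex_set n (C : set 'rV[R]_n) : Prop :=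
  forall a b t, C a -> C b -> 0 <= t <= 1 -> C (t *: a + (1 - t) *: b).

Definition convex_on n (C : set 'rV[R]_n) (g : 'rV[R]_n -> R) : Prop :=
  forall a b t, C a -> C b -> 0 <= t <= 1 ->
    g (t *: a + (1 - t) *: b) <= t * g a + (1 - t) * g b.

Definition diam n (C : set 'rV[R]_n) : R :=
  sup [set enorm (p.1 - p.2) | p in C `*` C].

Definition normal_cone n (C : set 'rV[R]_n) (y : 'rV[R]_n) : set 'rV[R]_n :=
  [set v | forall y', C y' -> dotv v (y' - y) <= 0].

Definition dist0 n (S : set 'rV[R]_n) : R := inf [set enorm s | s in S].

Definition is_proj n (C : set 'rV[R]_n) (v p : 'rV[R]_n) : Prop :=
  C p /\ forall q, C q -> enorm (v - p) <= enorm (v - q).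

(* power with the KL convention 0^theta = 0 (also for theta = 0) *)
Definition klpow (a th : R) : R := if a == 0 then 0 else a `^ th.

End Defs.

Definition Fexp (R : realType) (d : measure_display) (Xi : measurableType d)
  (P : probability Xi R) dx dy (f : 'rV[R]_dx -> 'rV[R]_dy -> Xi -> R)
  (x : 'rV[R]_dx) (y : 'rV[R]_dy) : R :=
  fine (\int[P]_xi (f x y xi)%:E)%E.

From HB Require Import structures.
From mathcomp Require Import all_boot all_order all_algebra.
From mathcomp Require Import all_classical all_reals all_analysis.
From mathcomp Require Import measurable_realfun ring lra.
Set Implicit Arguments.
Unset Strict Implicit.
Unset Printing Implicit Defensive.
Import Order.TTheory GRing.Theory Num.Theory.
Import numFieldNormedType.Exports.
Local Open Scope classical_set_scope.
Local Open Scope ring_scope.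

(* Write x_r(y) for x_r(y, z) with z = z^k_{tau+1}, y0 = y^k_tau,
   y+ = y^k_{tau,+}(z), x+ = x_r(y+) and x* = x_r(y(z)).  Strong convexity
   of F_r(., y, z) (modulus r - rho) and the maximality of y(z) give
   (r - rho)/2 |x* - x+|^2 <= a, where a = max_Y F(x+, .) - F(x+, y+) is the
   dual gap at (x+, y+).  The projection defining y+ exhibits an element of
   -grad_y F(x+, y+) + N_Y(y+) of norm at most sqrt(cst) |y0 - y+|, because
   grad_y F is L_y-Lipschitz and x_r is L_y/(r - rho)-Lipschitz; the KL
   inequality therefore bounds mu a^theta by that norm.  For theta <= 1/2 one
   writes a = a^(1 - 2 theta) a^(2 theta) with a <= ell D_Y, which gives
   |x* - x+|^2 <= varpi |y0 - y+|^2; for theta > 1/2 Young's inequality with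
   exponents 2 theta and 2 theta/(2 theta - 1) splits beta |y0 - y+|^(1/theta)
   into L_y |y0 - y+|^2 plus C_beta. *)

Section EuclideanRow.
Context {R : realType} {n : nat}.
Implicit Types u v w a b z p h : 'rV[R]_n.

Lemma dotvC u v : dotv u v = dotv v u.
Proof. by rewrite /dotv; apply: eq_bigr => i _; rewrite mulrC. Qed.

Lemma dotvDl u v w : dotv (u + v) w = dotv u w + dotv v w.
Proof. by rewrite /dotv -big_split; apply: eq_bigr => i _; rewrite mxE mulrDl. Qed.

Lemma dotvZl k u v : dotv (k *: u) v = k * dotv u v.
Proof. by rewrite /dotv mulr_sumr; apply: eq_bigr => i _; rewrite mxE mulrA. Qed.

Lemma dotvNl u v : dotv (- u) v = - dotv u v.
Proof. by rewrite -scaleN1r dotvZl mulN1r. Qed.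

Lemma dotvBl u v w : dotv (u - v) w = dotv u w - dotv v w.
Proof. by rewrite dotvDl dotvNl. Qed.

Lemma dotvDr u v w : dotv w (u + v) = dotv w u + dotv w v.
Proof. by rewrite dotvC dotvDl !(dotvC w). Qed.

Lemma dotvZr k u v : dotv v (k *: u) = k * dotv v u.
Proof. by rewrite dotvC dotvZl dotvC. Qed.

Lemma dotvNr u v : dotv v (- u) = - dotv v u.
Proof. by rewrite dotvC dotvNl dotvC. Qed.

Lemma sqnorm_ge0 u : 0 <= sqnorm u.
Proof.
by rewrite /sqnorm /dotv; apply: sumr_ge0 => i _; rewrite -expr2 sqr_ge0.
Qed.

Lemma sqnormD u v : sqnorm (u + v) = sqnorm u + 2 * dotv u v + sqnorm v.
Proof. rewrite /sqnorm dotvDl !dotvDr (dotvC v u); ring. Qed.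

Lemma sqnormB u v : sqnorm (u - v) = sqnorm u - 2 * dotv u v + sqnorm v.
Proof. rewrite /sqnorm dotvDl !dotvDr (dotvC (- v) u) !dotvNl !dotvNr; ring. Qed.

Lemma sqnormZ k u : sqnorm (k *: u) = k ^+ 2 * sqnorm u.
Proof. rewrite /sqnorm dotvZl dotvZr; ring. Qed.

Lemma sqnormN u : sqnorm (- u) = sqnorm u.
Proof. by rewrite /sqnorm dotvNl dotvNr opprK. Qed.

Lemma sqnormBC u v : sqnorm (u - v) = sqnorm (v - u).
Proof. by rewrite -sqnormN opprB. Qed.

Lemma dotv_le_sqnormD u v : 2 * dotv u v <= sqnorm u + sqnorm v.
Proof. have := sqnorm_ge0 (u - v); rewrite sqnormB; lra. Qed.

Lemma sqnormD_le u v : sqnorm (u + v) <= 2 * sqnorm u + 2 * sqnorm v.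
Proof. have := dotv_le_sqnormD u v; rewrite sqnormD; lra. Qed.

Lemma sqnorm_conv (t : R) a b z :
  sqnorm (t *: a + (1 - t) *: b - z) =
  t * sqnorm (a - z) + (1 - t) * sqnorm (b - z) - t * (1 - t) * sqnorm (a - b).
Proof.
have -> : t *: a + (1 - t) *: b - z = t *: (a - z) + (1 - t) *: (b - z).
  by apply/rowP => i; rewrite !mxE; ring.
have -> : a - b = (a - z) - (b - z) by apply/rowP => i; rewrite !mxE; ring.
move: (a - z) (b - z) => a' b'.
rewrite (sqnormB a' b') sqnormD !sqnormZ !dotvZl !dotvZr; ring.
Qed.

Lemma sqnorm_segment (t : R) p h z :
  sqnorm (p + t *: h - z) =
  sqnorm (p - z) + 2 * t * dotv (p - z) h + t ^+ 2 * sqnorm h.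
Proof.
have -> : p + t *: h - z = (p - z) + t *: h by apply/rowP => i; rewrite !mxE; ring.
rewrite (sqnormD (p - z)) sqnormZ dotvZr; ring.
Qed.

Lemma enorm0 : enorm (0 : 'rV[R]_n) = 0.
Proof.
by rewrite /enorm /sqnorm /dotv big1 ?sqrtr0 // => i _; rewrite mxE mul0r.
Qed.

Lemma enorm_ge0 u : 0 <= enorm u.
Proof. exact: sqrtr_ge0. Qed.

Lemma enormBC u v : enorm (u - v) = enorm (v - u).
Proof. by rewrite /enorm sqnormBC. Qed.

Lemma ler_enorm u v : (enorm u <= enorm v) = (sqnorm u <= sqnorm v).
Proof. by rewrite /enorm ler_sqrt // sqnorm_ge0. Qed.

Lemma sqnorm_le_mx_norm u : sqnorm u <= n%:R * `|u| ^+ 2.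
Proof.
apply: (@le_trans _ _ (\sum_(i < n) `|u| ^+ 2)); last first.
  by rewrite sumr_const card_ord mulr_natl.
apply: ler_sum => i _; rewrite -expr2 -real_normK ?num_real //.
rewrite ler_sqr ?nnegrE // [`|u|]mx_normrE.
exact: (le_bigmax _ (fun ij : 'I_1 * 'I_n => `|u ij.1 ij.2|) (ord0, i)).
Qed.

End EuclideanRow.

Section GradientIncrements.
Context {R : realType} {n : nat}.
Context {phi : 'rV[R]_n -> R} {p g h : 'rV[R]_n}.
Hypothesis phi_grad : is_grad phi p g.

Lemma is_grad_quotient_cvg :
  (fun t : R => t^-1 * (phi (p + t *: h) - phi p)) @ 0^'+ --> dotv g h.
Proof.
case: phi_grad => dphi dphiE.
have := @deriveE _ _ _ phi p h dphi; rewrite dphiE => <-.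
have -> : (fun t : R => t^-1 * (phi (p + t *: h) - phi p)) =
          (fun t : R => t^-1 *: ((phi \o shift p) (t *: h) - phi p)).
  by apply/funext => t /=; rewrite [t *: h + p]addrC.
move=> A /(@diff_derivable _ _ _ phi p h dphi) /nbhs_ballP [_ /posnumP[e] eA].
by exists e%:num => //= t et; rewrite lt_def => /andP[t_neq0 _]; apply: eA.
Qed.

Lemma is_grad_quotient_cvgD C :
  (fun t : R => t^-1 * (phi (p + t *: h) - phi p) + t * C) @ 0^'+ --> dotv g h.
Proof.
suff : (fun t : R => t^-1 * (phi (p + t *: h) - phi p) + t * C) @ 0^'+
         --> dotv g h + 0 * C by rewrite mul0r addr0.
apply: cvgD; first exact: is_grad_quotient_cvg.
by apply: cvgM; [exact: cvg_at_right_filter | exact: cvg_cst].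
Qed.

Lemma dotv_grad_ge A C :
  (forall t, 0 < t <= 1 -> t * A - t ^+ 2 * C <= phi (p + t *: h) - phi p) ->
  A <= dotv g h.
Proof.
move=> lb; apply: (cvgr_to_ge (is_grad_quotient_cvgD C)); near=> t.
have t0 : 0 < t by near: t; exact: nbhs_right_gt.
have t1 : t <= 1 by near: t; apply: nbhs_right_le; exact: ltr01.
have := lb t; rewrite t0 t1 => /(_ isT) lb_t.
rewrite -(ler_pM2l t0) mulrDr mulrA mulfV ?gt_eqF // mul1r; lra.
Unshelve. all: by end_near.
Qed.

Lemma dotv_grad_le A C :
  (forall t, 0 < t <= 1 -> phi (p + t *: h) - phi p <= t * A + t ^+ 2 * C) ->
  dotv g h <= A.
Proof.
move=> ub; apply: (cvgr_to_le (is_grad_quotient_cvgD (- C))); near=> t.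
have t0 : 0 < t by near: t; exact: nbhs_right_gt.
have t1 : t <= 1 by near: t; apply: nbhs_right_le; exact: ltr01.
have := ub t; rewrite t0 t1 => /(_ isT) ub_t.
rewrite -(ler_pM2l t0) mulrDr mulrA mulfV ?gt_eqF // mul1r; lra.
Unshelve. all: by end_near.
Qed.

End GradientIncrements.

(* The [convex_set] in scope is MathComp-Analysis' one, which shadows the
   definition of the same name above; it is phrased with [conv] and weights
   in [{i01 R}]. *)
Lemma convex_set_comb {R : realType} {n : nat} {X : set 'rV[R]_n}
    {a b : 'rV[R]_n} {t : R} :
  convex_set X -> X a -> X b -> 0 <= t <= 1 -> X (t *: a + (1 - t) *: b).
Proof.
move=> cX Xa Xb t01.
have t_itv : Itv.spec (@Itv.num_sem R) (Itv.Real `[0%Z, 1%Z]) t.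
  by rewrite /= /Itv.num_sem /= in_itv /= num_real.
by have := cX a b (Itv.mk t_itv); rewrite !inE; apply.
Qed.

Lemma le0_of_le_mul_small {R : realType} (K E : R) :
  (forall t, 0 < t <= 1 -> K <= t * E) -> K <= 0.
Proof.
move=> small; rewrite leNgt; apply/negP => K0.
have KE0 : 0 < K + `|E| by rewrite ltr_pwDl.
pose t := K / (K + `|E|).
have t0 : 0 < t by rewrite divr_gt0.
have t1 : t <= 1 by rewrite ler_pdivrMr // mul1r lerDl.
have := small t; rewrite t0 t1 => /(_ isT) KtE.
have : t * E <= t * `|E| by rewrite ler_pM2l // ler_norm.
have : t * `|E| < K.
  rewrite /t mulrAC ltr_pdivrMr // mulrDr; have := mulr_gt0 K0 K0; lra.
lra.
Qed.

Lemma conv_segment {R : realType} {n : nat} (t : R) (p u : 'rV[R]_n) :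
  p + t *: (u - p) = t *: u + (1 - t) *: p.
Proof. by apply/rowP => i; rewrite !mxE; ring. Qed.

Definition is_prox {R : realType} {n : nat} (X : set 'rV[R]_n)
    (G : 'rV[R]_n -> R) (r : R) (z xs : 'rV[R]_n) : Prop :=
  X xs /\ forall w, X w ->
    G xs + r / 2 * sqnorm (xs - z) <= G w + r / 2 * sqnorm (w - z).

Section WeaklyConvexProx.
Context {R : realType} {n : nat}.
Context {X : set 'rV[R]_n} {G : 'rV[R]_n -> R} {rho r : R} {z : 'rV[R]_n}.
Hypothesis cX : convex_set X.
Hypothesis G_wcvx : convex_on X (fun w => G w + rho / 2 * sqnorm w).

Lemma prox_growth xs u : rho < r -> is_prox X G r z xs -> X u ->
  G xs + r / 2 * sqnorm (xs - z) + (r - rho) / 2 * sqnorm (u - xs)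
    <= G u + r / 2 * sqnorm (u - z).
Proof.
move=> rho_lt_r [Xxs xs_min] Xu.
suff : G xs + r / 2 * sqnorm (xs - z) + (r - rho) / 2 * sqnorm (u - xs)
         - (G u + r / 2 * sqnorm (u - z)) <= 0 by lra.
apply: le0_of_le_mul_small ((r - rho) / 2 * sqnorm (u - xs)) _ => t /andP[t0 t1].
have t01 : 0 <= t <= 1 by rewrite t1 ltW.
have := xs_min _ (convex_set_comb cX Xu Xxs t01).
have := G_wcvx Xu Xxs t01.
have := sqnorm_conv t u xs 0; rewrite !subr0 => ->.
rewrite sqnorm_conv => wcvx_t min_t.
rewrite -(ler_pM2l t0); lra.
Qed.

Lemma prox_first_order (G' : 'rV[R]_n -> R) xs g u :
  is_prox X G' r z xs -> is_grad G' xs g -> X u ->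
  0 <= dotv g (u - xs) + r * dotv (xs - z) (u - xs).
Proof.
move=> [Xxs xs_min] xs_grad Xu.
suff : - (r * dotv (xs - z) (u - xs)) <= dotv g (u - xs) by lra.
apply: (dotv_grad_ge xs_grad (C := r / 2 * sqnorm (u - xs))) => t /andP[t0 t1].
have t01 : 0 <= t <= 1 by rewrite t1 ltW.
have := xs_min _ (convex_set_comb cX Xu Xxs t01).
rewrite -conv_segment sqnorm_segment; lra.
Qed.

Lemma weakly_convex_grad_le p g u : X p -> is_grad G p g -> X u ->
  dotv g (u - p) <= G u - G p + rho / 2 * sqnorm (u - p).
Proof.
move=> Xp p_grad Xu.
have sqnorm_u : sqnorm u = sqnorm p + 2 * dotv p (u - p) + sqnorm (u - p).
  by rewrite -sqnormD; congr sqnorm; apply/rowP => i; rewrite !mxE; ring.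
apply: (dotv_grad_le p_grad (C := - (rho / 2 * sqnorm (u - p)))) => t /andP[t0 t1].
have t01 : 0 <= t <= 1 by rewrite t1 ltW.
have := G_wcvx Xu Xp t01.
have := sqnorm_segment t p (u - p) 0; rewrite !subr0 -conv_segment => ->.
nra.
Qed.

(* The optimality of x1 and x2 gives (r - rho) |x1 - x2|^2 <= <g' - g, x1 - x2>;
   conclude by Cauchy-Schwarz. *)
Lemma prox_sensitivity (G' : 'rV[R]_n -> R) x1 x2 g g' : rho < r ->
  is_prox X G r z x1 -> is_prox X G' r z x2 ->
  is_grad G x2 g -> is_grad G' x2 g' ->
  (r - rho) ^+ 2 * sqnorm (x1 - x2) <= sqnorm (g' - g).
Proof.
move=> rho_lt_r prox1 prox2 grad_g grad_g'.
have [X1 _] := prox1; have [X2 _] := prox2.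
have growth := prox_growth rho_lt_r prox1 X2.
have below := weakly_convex_grad_le X2 grad_g X1.
have first_order := prox_first_order prox2 grad_g' X1.
have sqnorm_x1z : sqnorm (x1 - z) =
    sqnorm (x2 - z) + 2 * dotv (x2 - z) (x1 - x2) + sqnorm (x1 - x2).
  by rewrite -sqnormD; congr sqnorm; apply/rowP => i; rewrite !mxE; ring.
rewrite sqnorm_x1z (sqnormBC x2 x1) in growth.
have mono : (r - rho) * sqnorm (x1 - x2) <= dotv (g' - g) (x1 - x2).
  rewrite dotvBl; lra.
have := dotv_le_sqnormD ((r - rho) *: (x1 - x2)) (g' - g).
rewrite dotvZl sqnormZ (dotvC (x1 - x2)).
have : 0 < r - rho by rewrite subr_gt0.
nra.
Qed.

End WeaklyConvexProx.

Section Expectation.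
Context {d : measure_display} {T : measurableType d} {R : realType}.
Variable P : probability T R.

Lemma sqr_expectation_le (h : T -> R) (m : R) :
  P.-integrable setT (EFin \o h) -> (\int[P]_s (h s)%:E = m%:E)%E ->
  ((m ^+ 2)%:E <= \int[P]_s (h s ^+ 2)%:E)%E.
Proof.
move=> hi hm.
have mh : measurable_fun setT h by apply/measurable_EFinP; exact: measurable_int hi.
have [fin|] := ltP (\int[P]_s (h s ^+ 2)%:E)%E +oo%E; last first.
  by rewrite leye_eq => /eqP ->; rewrite leey.
have h2i : P.-integrable setT (EFin \o (fun s => h s ^+ 2)).
  apply/integrableP; split; first by apply/measurable_EFinP; exact: measurable_funX.
  by under eq_integral => s _ do rewrite /= ger0_norm ?sqr_ge0 //.
have ci : P.-integrable setT (EFin \o (fun s => 2 * m * h s)).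
  apply: (eq_integrable measurableT _ _ _
    (integrableZl measurableT (2 * m) hi)) => s _.
  by rewrite /= EFinM.
have ki : P.-integrable setT (EFin \o cst (m ^+ 2)).
  exact: finite_measure_integrable_cst.
have li : P.-integrable setT (EFin \o (fun s => 2 * m * h s - m ^+ 2)).
  apply: (eq_integrable measurableT _ _ _ (integrableB measurableT ci ki)) => s _.
  by rewrite /= EFinB.
have lin : (\int[P]_s ((2 * m * h s - m ^+ 2)%:E) = (m ^+ 2)%:E)%E.
  rewrite (eq_integral (fun s => (2 * m * h s)%:E - (cst (m ^+ 2) s)%:E))%E;
    last by move=> s _; rewrite EFinB.
  rewrite integralB_EFin // (eq_integral (fun s => (2 * m)%:E * (h s)%:E))%E;
    last by move=> s _; rewrite EFinM.
  have := integral_cst P measurableT (m ^+ 2)%:E => ->.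
  rewrite [X in (_ * X)%E](_ : _ = 1%E); last exact: probability_setT.
  by rewrite mule1 integralZl // hm -EFinM -EFinB; congr EFin; ring.
have : (0 <= \int[P]_s ((h s ^+ 2)%:E - (2 * m * h s - m ^+ 2)%:E))%E.
  apply: integral_ge0 => s _; rewrite -EFinB lee_fin.
  have := sqr_ge0 (h s - m); rewrite sqrrB; lra.
rewrite integralB_EFin // lin.
by rewrite sube_ge0 // fin_numE; apply/andP; split.
Qed.

Lemma sqnorm_expectationB_le {n : nat} (g1 g2 : T -> 'rV[R]_n)
    (G1 G2 : 'rV[R]_n) (K : R) :
  (forall i, P.-integrable setT (fun s => (g1 s ord0 i)%:E) /\
     (\int[P]_s (g1 s ord0 i)%:E = (G1 ord0 i)%:E)%E) ->
  (forall i, P.-integrable setT (fun s => (g2 s ord0 i)%:E) /\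
     (\int[P]_s (g2 s ord0 i)%:E = (G2 ord0 i)%:E)%E) ->
  (\int[P]_s (sqnorm (g1 s - g2 s))%:E <= K%:E)%E ->
  sqnorm (G1 - G2) <= K.
Proof.
move=> mean1 mean2 HK; rewrite -lee_fin; apply: le_trans HK.
rewrite /sqnorm /dotv -sumEFin.
have entry_int i : P.-integrable setT (EFin \o (fun s => (g1 s - g2 s) ord0 i)).
  have [i1 _] := mean1 i; have [i2 _] := mean2 i.
  apply: (eq_integrable measurableT _ _ _ (integrableB measurableT i1 i2)) => s _.
  by rewrite /= !mxE EFinB.
under eq_integral => s _ do rewrite -sumEFin.
rewrite ge0_integral_sum //; last 2 first.
- move=> i; apply/measurable_EFinP/measurable_funM;
    by apply/measurable_EFinP; exact: measurable_int (entry_int i).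
- by move=> i s _; rewrite lee_fin -expr2 sqr_ge0.
apply: lee_sum => i _; rewrite -!expr2.
have [_ e1] := mean1 i; have [_ e2] := mean2 i.
apply: sqr_expectation_le; first exact: entry_int.
rewrite (eq_integral (fun s => (g1 s ord0 i)%:E - (g2 s ord0 i)%:E))%E;
  last by move=> s _; rewrite !mxE EFinB.
rewrite integralB_EFin //; first by rewrite e1 e2 !mxE EFinB.
- exact: (mean1 i).1.
- exact: (mean2 i).1.
Qed.

Lemma fine_integralB_le (h1 h2 : T -> R) (L : R) :
  P.-integrable setT (fun s => (h1 s)%:E) ->
  P.-integrable setT (fun s => (h2 s)%:E) ->
  (\int[P]_s (`|h1 s - h2 s|)%:E <= L%:E)%E ->
  fine (\int[P]_s (h1 s)%:E)%E - fine (\int[P]_s (h2 s)%:E)%E <= L.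
Proof.
move=> i1 i2 HL.
have iB : P.-integrable setT (fun s => (h1 s - h2 s)%:E).
  apply: (eq_integrable measurableT _ _ _ (integrableB measurableT i1 i2)) => s _.
  by rewrite EFinB.
have := le_abse_integral P measurableT (measurable_int _ iB).
rewrite (eq_integral (fun s => (h1 s)%:E - (h2 s)%:E))%E;
  last by move=> s _; rewrite EFinB.
rewrite integralB_EFin // => /le_trans/(_ HL).
rewrite -(fineK (integrable_fin_num measurableT i1)).
rewrite -(fineK (integrable_fin_num measurableT i2)) -EFinB /= lee_fin.
exact: le_trans (ler_norm _).
Qed.

End Expectation.

Section ConvexBoundedSet.
Context {R : realType} {n : nat}.
Variable Y : set 'rV[R]_n.

Lemma proj_normal_cone v p :
  convex_set Y -> is_proj Y v p -> normal_cone Y p (v - p).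
Proof.
move=> cY [Yp p_min] q Yq.
apply: le0_of_le_mul_small (sqnorm (q - p) / 2) _ => t /andP[t0 t1].
have t01 : 0 <= t <= 1 by rewrite t1 ltW.
have := p_min _ (convex_set_comb cY Yq Yp t01).
have -> : v - (t *: q + (1 - t) *: p) = (v - p) - t *: (q - p).
  by apply/rowP => i; rewrite !mxE; ring.
rewrite ler_enorm (sqnormB (v - p)) sqnormZ dotvZr => le_t.
have : t * (2 * dotv (v - p) (q - p)) <= t * (t * sqnorm (q - p)) by lra.
rewrite ler_pM2l //; lra.
Qed.

Lemma dist0_le_enorm (S : set 'rV[R]_n) s : S s -> dist0 S <= enorm s.
Proof.
move=> Ss; apply: ge_inf; last by exists s.
by exists 0 => _ [u _ <-]; exact: enorm_ge0.
Qed.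

Hypothesis Ycompact : compact Y.

Lemma enorm_le_diam v v' : Y v -> Y v' -> enorm (v - v') <= diam Y.
Proof.
move=> Yv Yv'; apply: ub_le_sup; last by exists (v, v').
have [M [_ YM]] := compact_bounded Ycompact.
pose B := n%:R * (`|M| + 1) ^+ 2.
have sqnorm_le u : Y u -> sqnorm u <= B.
  move=> Yu; apply: le_trans (sqnorm_le_mx_norm u) _.
  rewrite ler_wpM2l // lerXn2r ?nnegrE ?addr_ge0 //.
  by apply: YM; rewrite ?inE // (le_lt_trans (ler_norm M)) ?ltrDl.
exists (Num.sqrt (4 * B)) => _ [[u u'] [/= Yu Yu'] <-].
apply: ler_wsqrtr; apply: le_trans (sqnormD_le _ _) _.
rewrite sqnormN; have := sqnorm_le _ Yu; have := sqnorm_le _ Yu'; lra.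
Qed.

Lemma lipschitz_le_diam (h : 'rV[R]_n -> R) ell v v' :
  (forall u u', Y u -> Y u' -> h u - h u' <= ell * enorm (u - u')) ->
  Y v -> Y v' -> h v - h v' <= ell * diam Y.
Proof.
move=> h_lip Yv Yv'.
have [ell0|ell_lt0] := leP 0 ell.
  exact: le_trans (h_lip _ _ Yv Yv') (ler_wpM2l ell0 (enorm_le_diam Yv Yv')).
(* a negative constant forces Y to be a single point *)
have enorm_le0 u u' : Y u -> Y u' -> enorm (u - u') <= 0.
  move=> Yu Yu'; have := h_lip _ _ Yu Yu'; have := h_lip _ _ Yu' Yu.
  rewrite enormBC; have := enorm_ge0 (u - u'); nra.
have diam_le0 : diam Y <= 0.
  apply: ge_sup; first by exists (enorm (v - v)), (v, v).
  by move=> _ [[u u'] [/= Yu Yu'] <-]; exact: enorm_le0.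
have := h_lip _ _ Yv Yv'; have := enorm_le0 _ _ Yv Yv'; have := enorm_ge0 (v - v').
nra.
Qed.

End ConvexBoundedSet.

Section KLGapTradeoff.
Context {R : realType}.

Lemma gap_le_of_kl_small (theta mu a A E : R) :
  0 <= theta <= 1 / 2 -> 0 < mu -> 0 <= a <= A -> 0 <= E ->
  mu * klpow a theta <= Num.sqrt E -> a <= A `^ (1 - 2 * theta) * (E / mu ^+ 2).
Proof.
move=> /andP[th0 th12] mu0 /andP[a0 aA] E0 KL.
have [->|a_neq0] := eqVneq a 0.
  by rewrite mulr_ge0 ?powR_ge0 ?divr_ge0 ?sqr_ge0.
rewrite /klpow (negbTE a_neq0) in KL.
have a2th : a `^ (2 * theta) <= E / mu ^+ 2.
  rewrite ler_pdivlMr ?exprn_gt0 // (mulrC 2 theta) powRrM powR_mulrn ?powR_ge0 //.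
  rewrite -exprMn mulrC -[E]sqr_sqrtr // ler_sqr ?nnegrE ?sqrtr_ge0 //.
  by rewrite mulr_ge0 ?powR_ge0 ?ltW.
have -> : a = a `^ (1 - 2 * theta) * a `^ (2 * theta).
  by rewrite -powRD ?a_neq0 ?implybT // subrK powRr1.
apply: ler_pM => //; try exact: powR_ge0.
by apply: ge0_ler_powR; rewrite ?nnegrE //; [lra | exact: le_trans aA].
Qed.

Lemma gap_le_of_kl_large (theta mu a E : R) :
  0 < theta -> 0 < mu -> 0 <= a ->
  mu * klpow a theta <= Num.sqrt E -> a <= (Num.sqrt E / mu) `^ theta^-1.
Proof.
move=> th0 mu0 a0 KL.
have [->|a_neq0] := eqVneq a 0; first exact: powR_ge0.
rewrite /klpow (negbTE a_neq0) mulrC -ler_pdivlMr // in KL.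
rewrite -{1}[a](@powRr1 _ a) // -(mulfV (lt0r_neq0 th0)) powRrM.
apply: ge0_ler_powR; rewrite ?nnegrE ?invr_ge0 ?powR_ge0 ?(ltW th0) //.
exact: le_trans (powR_ge0 _ _) KL.
Qed.

(* Young's inequality a b <= a^p/p + b^q/q with p = 2 theta,
   q = 2 theta/(2 theta - 1), a = (2 theta L)^(1/(2 theta)) s^(1/theta). *)
Lemma young_powR_split (theta L K b s : R) :
  1 / 2 < theta -> 0 < L -> 0 <= K -> 0 < b -> 0 <= s ->
  K * b * s `^ theta^-1 <= L * s ^+ 2 +
    (2 * theta - 1) / (2 * theta)
      * (K / (2 * theta * L) `^ ((2 * theta)^-1)) `^ (2 * theta / (2 * theta - 1))
      * b `^ (2 * theta / (2 * theta - 1)).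
Proof.
move=> th12 L0 K0 b0 s0.
have th0 : 0 < theta by lra.
pose p := 2 * theta; pose q := 2 * theta / (2 * theta - 1).
have p0 : 0 < p by rewrite mulr_gt0.
have q0 : 0 < q by rewrite divr_gt0 //; lra.
have pq : p^-1 + q^-1 = 1 by rewrite /p /q invf_div; field; rewrite !gt_eqF //; lra.
pose c := (p * L) `^ p^-1.
have c0 : 0 < c by rewrite powR_gt0 // mulr_gt0.
have a0 : 0 <= c * s `^ theta^-1 := mulr_ge0 (ltW c0) (powR_ge0 _ _).
have b0' : 0 <= K / c * b := mulr_ge0 (divr_ge0 K0 (ltW c0)) (ltW b0).
have := conjugate_powR a0 b0' p0 q0 pq.
have -> : c * s `^ theta^-1 * (K / c * b) = K * b * s `^ theta^-1.
  by field; rewrite gt_eqF.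
have -> : (c * s `^ theta^-1) `^ p / p = L * s ^+ 2.
  rewrite powRM ?powR_ge0 ?(ltW c0) // -!powRrM mulVf ?gt_eqF //.
  have -> : theta^-1 * p = 2%:R by rewrite /p mulrCA mulVf ?gt_eqF ?mulr1.
  rewrite (powRr1 (mulr_ge0 (ltW p0) (ltW L0))) (powR_mulrn _ s0).
  by field; rewrite gt_eqF.
rewrite powRM ?divr_ge0 ?(ltW c0) ?(ltW b0) // /q invf_div /c /p => young.
lra.
Qed.

(* In the application [c] is r - rho, [a] the dual gap at (x+, y+), [S] is
   |x* - x+|^2 and [Dy] is |y0 - y+|^2. *)
Lemma kl_gap_tradeoff (c A cst mu theta Ly r beta S a Dy : R) :
  0 < c -> 0 < mu -> 0 <= theta -> 0 < Ly -> 0 < r -> 0 < beta ->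
  0 <= cst -> 0 <= Dy ->
  c / 2 * S <= a -> 0 <= a <= A ->
  mu * klpow a theta <= Num.sqrt (cst * Dy) ->
  (theta <= 1 / 2 ->
     20 * r * (2 * A `^ (1 - 2 * theta) / c * (cst / mu ^+ 2)) * beta <= Ly) ->
  20 * r * beta * S <= Ly * Dy +
    (if theta <= 1 / 2 then 0 else
      (2 * theta - 1) / (2 * theta)
       * (20 * r * (2 / c * (Num.sqrt cst / mu) `^ (theta^-1))
            / (2 * theta * Ly) `^ ((2 * theta)^-1)) `^ (2 * theta / (2 * theta - 1))
       * beta `^ (2 * theta / (2 * theta - 1))).
Proof.
move=> c0 mu0 th0 Ly0 r0 beta0 cst0 Dy0 growth a0A KL small_step.
have rb0 : 0 <= 20 * r * beta by rewrite !mulr_ge0 ?ltW.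
have c2 : 0 <= 2 / c by rewrite divr_ge0 // ltW.
have S_le : 20 * r * beta * S <= 20 * r * beta * (2 / c * a).
  by apply: (ler_wpM2l rb0); rewrite mulrAC ler_pdivlMr //; lra.
apply: le_trans S_le _; case: ifPn => [th12|].
  have th_itv : 0 <= theta <= 1 / 2 by rewrite th0 th12.
  have a_le := gap_le_of_kl_small th_itv mu0 a0A (mulr_ge0 cst0 Dy0) KL.
  rewrite addr0; apply: le_trans (ler_wpM2r Dy0 (small_step th12)).
  have -> : 20 * r * (2 * A `^ (1 - 2 * theta) / c * (cst / mu ^+ 2)) * beta * Dy =
            20 * r * beta * (2 / c * (A `^ (1 - 2 * theta) * (cst * Dy / mu ^+ 2))).
    by ring.
  by have := ler_wpM2l c2 a_le => /(ler_wpM2l rb0).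
move=> th_not_le; have th12 : 1 / 2 < theta by rewrite ltNge.
have th0' : 0 < theta by lra.
have a_le : a <= (Num.sqrt cst / mu) `^ theta^-1 * Num.sqrt Dy `^ theta^-1.
  rewrite -powRM ?divr_ge0 ?sqrtr_ge0 ?(ltW mu0) // mulrAC -sqrtrM //.
  exact: gap_le_of_kl_large th0' mu0 (andP a0A).1 KL.
apply: le_trans (ler_wpM2l rb0 (ler_wpM2l c2 a_le)) _.
have K0 : 0 <= 20 * r * (2 / c * (Num.sqrt cst / mu) `^ theta^-1).
  by rewrite mulr_ge0 ?(mulr_ge0 c2) ?powR_ge0 ?mulr_ge0 // ltW.
have := young_powR_split th12 Ly0 K0 beta0 (sqrtr_ge0 Dy).
rewrite sqr_sqrtr //; lra.
Qed.

End KLGapTradeoff.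

Lemma restarted_iterates_mem {T : Type} (A : set T) (u : nat -> nat -> T)
    (N : nat) :
  A (u 0%N 0%N) -> (forall k, u k.+1 0%N = u k N) ->
  (forall k t, (t < N)%N -> A (u k t.+1)) ->
  forall k t, (t <= N)%N -> A (u k t).
Proof.
move=> A00 restart step; elim=> [|k IHk] [|t] tN //; try exact: step.
by rewrite restart; apply: IHk.
Qed.

Section SaddleGeometry.
Context {R : realType} {dx dy : nat}.
Variables (X : set 'rV[R]_dx) (Y : set 'rV[R]_dy) (F : 'rV[R]_dx -> 'rV[R]_dy -> R).
Variable gFx : 'rV[R]_dx -> 'rV[R]_dy -> 'rV[R]_dx.
Variable gFy : 'rV[R]_dx -> 'rV[R]_dy -> 'rV[R]_dy.
Variable xr : 'rV[R]_dy -> 'rV[R]_dx -> 'rV[R]_dx.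
Variables (rho r Ly ell : R).
Hypotheses (cX : convex_set X) (cY : convex_set Y) (Ycompact : compact Y).
Hypothesis rho_lt_r : rho < r.
Hypothesis F_wcvx :
  forall y, Y y -> convex_on X (fun u => F u y + rho / 2 * sqnorm u).
Hypothesis gFx_grad :
  forall x y, X x -> Y y -> is_grad (fun u => F u y) x (gFx x y).
Hypothesis gFx_lip : forall x y1 y2, X x -> Y y1 -> Y y2 ->
  sqnorm (gFx x y1 - gFx x y2) <= Ly ^+ 2 * sqnorm (y1 - y2).
Hypothesis gFy_lip : forall x1 x2 y1 y2, X x1 -> X x2 -> Y y1 -> Y y2 ->
  sqnorm (gFy x1 y1 - gFy x2 y2) <= Ly ^+ 2 * (sqnorm (x1 - x2) + sqnorm (y1 - y2)).
Hypothesis F_lip : forall x, X x -> forall v v', Y v -> Y v' ->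
  F x v - F x v' <= ell * enorm (v - v').
Hypothesis xrP : forall y z, Y y -> is_prox X (fun u => F u y) r z (xr y z).

Definition dual_gap x y := sup [set F x v | v in Y] - F x y.

Lemma xr_lipschitz z y1 y2 : Y y1 -> Y y2 ->
  sqnorm (xr y1 z - xr y2 z) <= (Ly / (r - rho)) ^+ 2 * sqnorm (y1 - y2).
Proof.
move=> Y1 Y2; have [X2 _] := xrP z Y2.
have c0 : 0 < r - rho by rewrite subr_gt0.
rewrite expr_div_n mulrAC ler_pdivlMr ?exprn_gt0 // mulrC.
apply: le_trans (prox_sensitivity cX (F_wcvx Y1) rho_lt_r (xrP z Y1) (xrP z Y2)
  (gFx_grad X2 Y1) (gFx_grad X2 Y2)) _.
by rewrite sqnormBC; apply: gFx_lip.
Qed.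

Lemma F_le_sup x v : X x -> Y v -> F x v <= sup [set F x w | w in Y].
Proof.
move=> Xx Yv; apply: ub_le_sup; last by exists v.
exists (F x v + ell * diam Y) => _ [w Yw <-].
have := lipschitz_le_diam Ycompact (F_lip Xx) Yw Yv; lra.
Qed.

Lemma dual_gap_ge0 x y : X x -> Y y -> 0 <= dual_gap x y.
Proof. by move=> Xx Yy; rewrite subr_ge0; apply: F_le_sup. Qed.

Lemma dual_gap_le_diam x y : X x -> Y y -> dual_gap x y <= ell * diam Y.
Proof.
move=> Xx Yy; rewrite lerBlDl; apply: ge_sup; first by exists (F x y), y.
by move=> _ [v Yv <-]; have := lipschitz_le_diam Ycompact (F_lip Xx) Yv Yy; lra.
Qed.

Lemma argmax_prox_growth z ys y : Y ys ->
  (forall v, Y v -> F (xr v z) v + r / 2 * sqnorm (xr v z - z)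
                    <= F (xr ys z) ys + r / 2 * sqnorm (xr ys z - z)) ->
  Y y -> (r - rho) / 2 * sqnorm (xr ys z - xr y z) <= dual_gap (xr y z) y.
Proof.
move=> Yys ys_max Yy; have [Xxy _] := xrP z Yy.
have growth := prox_growth cX (F_wcvx Yys) rho_lt_r (xrP z Yys) Xxy.
have := ys_max _ Yy; have := F_le_sup Xxy Yys.
rewrite (sqnormBC (xr y z)) in growth; rewrite /dual_gap; lra.
Qed.

(* With x0 = xr y0 z and x+ = xr yp z, the projection step yields the element
   ay^-1 (y0 - yp) + grad_y F(x0, y0) - grad_y F(x+, yp)
   of -grad_y F(x+, yp) + N_Y(yp). *)
Lemma proj_residual_le (ay : R) z y0 yp : 0 <= Ly -> 0 < ay -> Y y0 ->
  is_proj Y (y0 + ay *: gFy (xr y0 z) y0) yp ->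
  dist0 [set - gFy (xr yp z) yp + w | w in normal_cone Y yp]
    <= Num.sqrt ((2 / ay ^+ 2 + 2 * Ly ^+ 2 * (2 + Ly / (r - rho)) ^+ 2
                  + 2 * Ly ^+ 2) * sqnorm (y0 - yp)).
Proof.
move=> Ly0 ay0 Yy0 yp_proj; have Yyp : Y yp := yp_proj.1.
have [Xx0 _] := xrP z Yy0; have [Xxp _] := xrP z Yyp.
set x0 := xr y0 z; set xp := xr yp z.
set g := gFy x0 y0; set Dy := sqnorm (y0 - yp).
pose w := ay^-1 *: (y0 + ay *: g - yp).
have Nw : normal_cone Y yp w.
  move=> q Yq; rewrite dotvZl; apply: mulr_ge0_le0; first by rewrite invr_ge0 ltW.
  by have /(_ q Yq) := proj_normal_cone cY yp_proj.
apply: le_trans (dist0_le_enorm (ex_intro2 _ _ w Nw erefl)) _.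
have -> : - gFy xp yp + w = ay^-1 *: (y0 - yp) + (g - gFy xp yp).
  by apply/rowP => i; rewrite !mxE; field; rewrite gt_eqF.
apply: ler_wsqrtr; apply: le_trans (sqnormD_le _ _) _.
have x_lip := xr_lipschitz z Yy0 Yyp; rewrite -/x0 -/xp -/Dy in x_lip.
have g_lip := gFy_lip Xx0 Xxp Yy0 Yyp; rewrite -/x0 -/xp -/g -/Dy in g_lip.
have Ly_c0 : 0 <= Ly / (r - rho) by rewrite divr_ge0 // subr_ge0 ltW.
have Dy0 : 0 <= Dy := sqnorm_ge0 _.
have sigma_ge : (Ly / (r - rho)) ^+ 2 <= (2 + Ly / (r - rho)) ^+ 2.
  by rewrite ler_sqr ?nnegrE ?addr_ge0 //; lra.
have := ler_wpM2l (sqr_ge0 Ly) (le_trans x_lip (ler_wpM2r Dy0 sigma_ge)).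
rewrite sqnormZ exprVn -/Dy; lra.
Qed.

Lemma prox_argmax_gap_bound (mu theta ay beta : R) z y0 yp ys :
  0 < mu -> 0 <= theta -> 0 < Ly -> 0 < r -> 0 < ay -> 0 < beta ->
  (forall x y, X x -> Y y ->
     mu * klpow (dual_gap x y) theta
       <= dist0 [set - gFy x y + w | w in normal_cone Y y]) ->
  (theta <= 1 / 2 ->
     20 * r * (2 * (ell * diam Y) `^ (1 - 2 * theta) / (r - rho)
       * ((2 / ay ^+ 2 + 2 * Ly ^+ 2 * (2 + Ly / (r - rho)) ^+ 2
           + 2 * Ly ^+ 2) / mu ^+ 2))
       * beta <= Ly) ->
  Y y0 -> is_proj Y (y0 + ay *: gFy (xr y0 z) y0) yp ->
  Y ys ->
  (forall v, Y v -> F (xr v z) v + r / 2 * sqnorm (xr v z - z)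
                    <= F (xr ys z) ys + r / 2 * sqnorm (xr ys z - z)) ->
  20 * r * beta * sqnorm (xr ys z - xr yp z) <= Ly * sqnorm (y0 - yp) +
    (if theta <= 1 / 2 then 0 else
      (2 * theta - 1) / (2 * theta)
       * (20 * r * (2 / (r - rho) * (Num.sqrt (2 / ay ^+ 2
              + 2 * Ly ^+ 2 * (2 + Ly / (r - rho)) ^+ 2 + 2 * Ly ^+ 2) / mu)
              `^ (theta^-1))
            / (2 * theta * Ly) `^ ((2 * theta)^-1)) `^ (2 * theta / (2 * theta - 1))
       * beta `^ (2 * theta / (2 * theta - 1))).
Proof.
move=> mu0 th0 Ly0 r0 ay0 beta0 KL small_step Yy0 yp_proj Yys ys_max.
have Yyp : Y yp := yp_proj.1; have [Xxp _] := xrP z Yyp.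
apply: (kl_gap_tradeoff (A := ell * diam Y) (a := dual_gap (xr yp z) yp)) => //.
- by rewrite subr_gt0.
- have : 0 <= 2 / ay ^+ 2 by rewrite divr_ge0 // sqr_ge0.
  have := sqr_ge0 Ly; have := sqr_ge0 (2 + Ly / (r - rho)); nra.
- exact: sqnorm_ge0.
- exact: argmax_prox_growth.
- by rewrite dual_gap_ge0 ?dual_gap_le_diam.
- exact: le_trans (KL _ _ Xxp Yyp) (proj_residual_le (ltW Ly0) ay0 Yy0 yp_proj).
Qed.

End SaddleGeometry.

Theorem lemmaA13
  (R : realType) (d : measure_display) (Xi : measurableType d)
  (P : probability Xi R) (dx dy : nat)
  (X : set 'rV[R]_dx) (Y : set 'rV[R]_dy)
  (f : 'rV[R]_dx -> 'rV[R]_dy -> Xi -> R)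
  (gfx : 'rV[R]_dx -> 'rV[R]_dy -> Xi -> 'rV[R]_dx)
  (gfy : 'rV[R]_dx -> 'rV[R]_dy -> Xi -> 'rV[R]_dy)
  (gFx : 'rV[R]_dx -> 'rV[R]_dy -> 'rV[R]_dx)
  (gFy : 'rV[R]_dx -> 'rV[R]_dy -> 'rV[R]_dy)
  (ell Lx Ly rho sigx sigy Flow mu theta : R)
  (T M B : nat) (ax ay beta r : R)
  (projX : 'rV[R]_dx -> 'rV[R]_dx) (projY : 'rV[R]_dy -> 'rV[R]_dy)
  (xr : 'rV[R]_dy -> 'rV[R]_dx -> 'rV[R]_dx)
  (ystar : nat -> nat -> 'rV[R]_dy)
  (x z : nat -> nat -> 'rV[R]_dx) (y : nat -> nat -> 'rV[R]_dy)
  (Gx : nat -> nat -> 'rV[R]_dx) (Gy : nat -> nat -> 'rV[R]_dy)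
  (xi : nat -> nat -> nat -> Xi) :
  let F := Fexp P f in
  let Fr := fun x' y' z' => F x' y' + r / 2 * sqnorm (x' - z') in
  let dr := fun y' z' => Fr (xr y' z') y' z' in
  let sigma2 := 2 + Ly / (r - rho) in
  let cst := 2 / ay ^+ 2 + 2 * Ly ^+ 2 * sigma2 ^+ 2 + 2 * Ly ^+ 2 in
  let varpi := 2 * (ell * diam Y) `^ (1 - 2 * theta) / (r - rho)
                 * (cst / mu ^+ 2) in
  let kappa := 2 / (r - rho) * (Num.sqrt cst / mu) `^ (theta^-1) in
  let Cbeta := (2 * theta - 1) / (2 * theta)
       * (20 * r * kappa / (2 * theta * Ly) `^ ((2 * theta)^-1))
           `^ (2 * theta / (2 * theta - 1))
       * beta `^ (2 * theta / (2 * theta - 1)) in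
  (* X, Y nonempty closed convex; Y compact *)
  X !=set0 -> closed X -> convex_set X ->
  Y !=set0 -> closed Y -> convex_set Y -> compact Y ->
  (* F is the expectation of f (f(x,y;.) integrable) *)
  (forall x' y', X x' -> Y y' -> P.-integrable setT (fun s => (f x' y' s)%:E)) ->
  (* (ii) *)
  (forall x1 x2 y1 y2, X x1 -> X x2 -> Y y1 -> Y y2 ->
     (\int[P]_s (`|f x1 y1 s - f x2 y2 s|)%:E
        <= (ell * (enorm (x1 - x2) + enorm (y1 - y2)))%:E)%E) ->
  (* stochastic partial gradients of f *)
  (forall x' y' s, X x' -> Y y' ->
     is_grad (fun u => f u y' s) x' (gfx x' y' s) /\
     is_grad (fun v => f x' v s) y' (gfy x' y' s)) ->
  (* (iii) *)
  (forall x1 x2 y', X x1 -> X x2 -> Y y' ->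
     (\int[P]_s (sqnorm (gfx x1 y' s - gfx x2 y' s))%:E
        <= (Lx ^+ 2 * sqnorm (x1 - x2))%:E)%E) ->
  (forall x' y1 y2, X x' -> Y y1 -> Y y2 ->
     (\int[P]_s (sqnorm (gfx x' y1 s - gfx x' y2 s))%:E
        <= (Ly ^+ 2 * sqnorm (y1 - y2))%:E)%E) ->
  (forall x1 x2 y1 y2, X x1 -> X x2 -> Y y1 -> Y y2 ->
     (\int[P]_s (sqnorm (gfy x1 y1 s - gfy x2 y2 s))%:E
        <= (Ly ^+ 2 * (sqnorm (x1 - x2) + sqnorm (y1 - y2)))%:E)%E) ->
  (* (iv) *)
  (forall y', Y y' -> convex_on X (fun u => F u y' + rho / 2 * sqnorm u)) ->
  (* partial gradients of F *)
  (forall x' y', X x' -> Y y' ->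
     is_grad (fun u => F u y') x' (gFx x' y') /\
     is_grad (fun v => F x' v) y' (gFy x' y')) ->
  (* (v) unbiasedness and bounded variance *)
  (forall x' y', X x' -> Y y' ->
     (forall i, P.-integrable setT (fun s => (gfx x' y' s ord0 i)%:E) /\
        (\int[P]_s (gfx x' y' s ord0 i)%:E = (gFx x' y' ord0 i)%:E)%E) /\
     (forall j, P.-integrable setT (fun s => (gfy x' y' s ord0 j)%:E) /\
        (\int[P]_s (gfy x' y' s ord0 j)%:E = (gFy x' y' ord0 j)%:E)%E) /\
     (\int[P]_s (sqnorm (gfx x' y' s - gFx x' y'))%:E <= (sigx ^+ 2)%:E)%E /\
     (\int[P]_s (sqnorm (gfy x' y' s - gFy x' y'))%:E <= (sigy ^+ 2)%:E)%E) ->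
  (* (vi) *)
  (Flow%:E <= ereal_sup [set ereal_inf [set (F u v)%:E | u in X] | v in Y])%E ->
  (* Extended KL assumption *)
  0 < mu -> 0 <= theta <= 1 ->
  (forall x' y', X x' -> Y y' ->
     mu * klpow (sup [set F x' v | v in Y] - F x' y') theta
       <= dist0 [set - gFy x' y' + w | w in normal_cone Y y']) ->
  (* parameters *)
  0 < Ly -> rho < r ->
  (0 < T)%N -> (0 < M)%N -> (0 < B)%N ->
  0 < ax -> 0 < ay -> 0 < beta -> 0 < r ->
  (theta <= 1 / 2 -> 20 * r * varpi * beta <= Ly) ->
  (* Euclidean projections *)
  (forall v, is_proj X v (projX v)) ->
  (forall v, is_proj Y v (projY v)) ->
  (* x_r(y,z) = argmin_{x in X} F_r(x,y,z) *)
  (forall y' z', Y y' ->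
     X (xr y' z') /\ forall u, X u -> Fr (xr y' z') y' z' <= Fr u y' z') ->
  (* y(z^k_{tau+1}) in argmax_{y in Y} d_r(y, z^k_{tau+1}) *)
  (forall k tau, Y (ystar k tau) /\
     forall v, Y v -> dr v (z k tau.+1) <= dr (ystar k tau) (z k tau.+1)) ->
  (* Algorithm 1 *)
  X (x 0%N 0%N) -> Y (y 0%N 0%N) ->
  (forall k,
     Gx k 0%N = (B%:R)^-1 *: \sum_(i < B) gfx (x k 0%N) (y k 0%N) (xi k 0%N i) /\
     Gy k 0%N = (B%:R)^-1 *: \sum_(i < B) gfy (x k 0%N) (y k 0%N) (xi k 0%N i)) ->
  (forall k tau, (tau.+1 < T)%N ->
     Gx k tau.+1 = (M%:R)^-1 *: \sum_(i < M)
         (gfx (x k tau.+1) (y k tau.+1) (xi k tau.+1 i)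
          - gfx (x k tau) (y k tau) (xi k tau.+1 i)) + Gx k tau /\
     Gy k tau.+1 = (M%:R)^-1 *: \sum_(i < M)
         (gfy (x k tau.+1) (y k tau.+1) (xi k tau.+1 i)
          - gfy (x k tau) (y k tau) (xi k tau.+1 i)) + Gy k tau) ->
  (forall k tau, (tau < T)%N ->
     x k tau.+1 = projX (x k tau - ax *: (Gx k tau + r *: (x k tau - z k tau))) /\
     y k tau.+1 = projY (y k tau + ay *: Gy k tau) /\
     z k tau.+1 = z k tau + beta *: (x k tau.+1 - z k tau)) ->
  (forall k, x k.+1 0%N = x k T /\ y k.+1 0%N = y k T /\ z k.+1 0%N = z k T) ->
  forall k tau, (tau < T)%N ->
    let zz := z k tau.+1 in
    let yp := projY (y k tau + ay *: gFy (xr (y k tau) zz) (y k tau)) in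
    20 * r * beta * sqnorm (xr (ystar k tau) zz - xr yp zz)
      <= Ly * sqnorm (y k tau - yp) + (if theta <= 1 / 2 then 0 else Cbeta).
Proof.
move=> F Fr dr sigma2 cst varpi kappa Cbeta _ _ cX _ _ cY Ycompact f_int f_lip _ _
  gfx_lip gfy_lip F_wcvx F_grad grad_mean _ mu0 theta01 KL Ly0 rho_lt_r _ _ _ _ ay0
  beta0 r0 small_step _ projYP xrP ystarP _ Y00 _ _ alg restart k tau tauT.
have gFx_grad x' y' : X x' -> Y y' -> is_grad (fun u => F u y') x' (gFx x' y').
  by move=> Xx Yy'; case: (F_grad _ _ Xx Yy').
have gFx_lip x' y1 y2 : X x' -> Y y1 -> Y y2 ->
    sqnorm (gFx x' y1 - gFx x' y2) <= Ly ^+ 2 * sqnorm (y1 - y2).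
  move=> Xx Y1 Y2; exact: sqnorm_expectationB_le (grad_mean _ _ Xx Y1).1
    (grad_mean _ _ Xx Y2).1 (gfx_lip _ _ _ Xx Y1 Y2).
have gFy_lip x1 x2 y1 y2 : X x1 -> X x2 -> Y y1 -> Y y2 ->
    sqnorm (gFy x1 y1 - gFy x2 y2) <= Ly ^+ 2 * (sqnorm (x1 - x2) + sqnorm (y1 - y2)).
  move=> X1 X2 Y1 Y2; exact: sqnorm_expectationB_le (grad_mean _ _ X1 Y1).2.1
    (grad_mean _ _ X2 Y2).2.1 (gfy_lip _ _ _ _ X1 X2 Y1 Y2).
have F_lip x' : X x' -> forall v v', Y v -> Y v' ->
    F x' v - F x' v' <= ell * enorm (v - v').
  move=> Xx v v' Yv Yv'; have := fine_integralB_le (f_int _ _ Xx Yv)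
    (f_int _ _ Xx Yv') (f_lip _ _ _ _ Xx Xx Yv Yv').
  by rewrite subrr enorm0 add0r.
have Yy : Y (y k tau).
  apply: (restarted_iterates_mem Y00 (fun k => (restart k).2.1)) (ltnW tauT).
  by move=> k' t tT; rewrite (alg k' t tT).2.1; exact: (projYP _).1.
have [Yys ys_max] := ystarP k tau.
exact: (prox_argmax_gap_bound cX cY Ycompact rho_lt_r F_wcvx gFx_grad gFx_lip
  gFy_lip F_lip xrP mu0 (andP theta01).1 Ly0 r0 ay0 beta0 KL small_step Yy (projYP _)
  Yys ys_max).
Qed.
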